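(* Let $X \subseteq \mathbb{Z}^3$ be a lattice-convex set with $\Delta_3 \subseteq X \subseteq T_3$, where $\Delta_3 = \{0,e_1,e_2,e_3\}$ and $T_3 = \{(x_1,x_2,x_3) \in \mathbb{R}^3 : x_1 \le 1, x_2 \le 1, x_3 \le 1, x_1+x_2+x_3 \ge 0\}$. If $\mathrm{conv}(\Delta_3)$ is a simplex of maximal volume in $\mathrm{conv}(X)$, then $X$ is unimodularly equivalent to one of the four sets whose elements are the columns of the following matrices: $\begin{pmatrix} 0&1&0&0\\0&0&1&0\\0&0&0&1\end{pmatrix}$, $\begin{pmatrix} 0&1&0&0&-1\\0&0&1&0&0\\0&0&0&1&1\end{pmatrix}$, $\begin{pmatrix} 0&1&0&0&-1&-1\\0&0&1&0&0&1\\0&0&0&1&1&0\end{pmatrix}$, $\begin{pmatrix} 0&1&0&0&-1&0\\0&0&1&0&0&-1\\0&0&0&1&1&1\end{pmatrix}$. Moreover, each of these four sets $X'$ satisfies $\mathrm{rc}_\ell(X') = \mathrm{rc}(X') = 4$.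
   Context: A set $X \subseteq \mathbb{Z}^d$ is lattice-convex if $\mathrm{conv}(X) \cap \mathbb{Z}^d = X$. Two sets $X, X' \subseteq \mathbb{R}^d$ are unimodularly equivalent if $X = UX' + t$ for some $U \in \mathbb{Z}^{d\times d}$ with $|\det U| = 1$ and some $t \in \mathbb{Z}^d$. $\mathrm{rc}(X)$ is the smallest number of facets of a polyhedron $P$ with $P \cap \mathbb{Z}^d = X$. For $Y \subseteq \mathbb{Z}^d$, $\mathrm{rc}(X,Y)$ is the smallest number of inequalities in a linear system $Ax \le b$ satisfied by all points of $X$ and such that each point of $Y\setminus X$ violates at least one inequality; with $B_t = [-t,t]^d\cap\mathbb{Z}^d$, $\mathrm{rc}_\ell(X) = \max_{t\in\mathbb{Z}_{>0}} \mathrm{rc}(X,B_t)$. *)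

From HB Require Import structures.
From mathcomp Require Import all_boot all_order all_algebra.
From mathcomp Require Import reals.
Unset Printing Implicit Defensive.
Import Order.TTheory GRing.Theory Num.Theory.
Local Open Scope ring_scope.

Definition zpt := 'cV[int]_3.
Definition zset := zpt -> Prop.

Definition toR (R : numDomainType) (z : zpt) : 'cV[R]_3 :=
  map_mx (fun a : int => a%:~R) z.

Definition in_conv (R : realType) (X : zset) (p : 'cV[R]_3) : Prop :=
  exists (n : nat) (pts : 'I_n -> zpt) (w : 'I_n -> R),
    [/\ forall i, X (pts i), forall i, 0 <= w i, \sum_i w i = 1 &
        p = \sum_i w i *: toR R (pts i)].

Definition lattice_convex (R : realType) (X : zset) : Prop :=
  forall z : zpt, @in_conv R X (toR R z) <-> X z.

Definition Delta3 (z : zpt) : Prop := z = 0 \/ exists i : 'I_3, z = delta_mx i 0.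

Definition T3 (z : zpt) : Prop :=
  (forall i : 'I_3, z i 0 <= 1) /\ 0 <= \sum_(i < 3) z i 0.

Definition simplex_volume (R : realType) (v : 'I_4 -> 'cV[R]_3) : R :=
  `|\det (\matrix_(i < 3, j < 3) (v (lift ord0 j) i 0 - v ord0 i 0))| / 6%:R.

Definition delta_vertices (R : realType) (k : 'I_4) : 'cV[R]_3 :=
  if unlift ord0 k is Some j then delta_mx j 0 else 0.

Definition max_vol_simplex (R : realType) (X : zset) (v : 'I_4 -> 'cV[R]_3) : Prop :=
  (forall k, @in_conv R X (v k)) /\
  forall w : 'I_4 -> 'cV[R]_3, (forall k, @in_conv R X (w k)) ->
    @simplex_volume R w <= @simplex_volume R v.

Definition unimod_equiv (X X' : zset) : Prop :=
  exists (U : 'M[int]_3) (t : zpt), `|\det U| = 1 /\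
    forall x, X x <-> exists2 x', X' x' & x = U *m x' + t.

Definition mkpt (a b c : int) : zpt := \col_(i < 3) nth 0 [:: a; b; c] i.

Definition S1 : seq zpt := [:: mkpt 0 0 0; mkpt 1 0 0; mkpt 0 1 0; mkpt 0 0 1].
Definition S2 : seq zpt := S1 ++ [:: mkpt (-1) 0 1].
Definition S3 : seq zpt := S1 ++ [:: mkpt (-1) 0 1; mkpt (-1) 1 0].
Definition S4 : seq zpt := S1 ++ [:: mkpt (-1) 0 1; mkpt 0 (-1) 1].

Definition seqset (s : seq zpt) : zset := fun z => z \in s.

Definition separates (R : realType) (X Y : zset) (m : nat) : Prop :=
  exists (A : 'M[R]_(m, 3)) (b : 'cV[R]_m),
    (forall x, X x -> forall i, (A *m toR R x) i 0 <= b i 0) /\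
    (forall y, Y y -> ~ X y -> exists i, b i 0 < (A *m toR R y) i 0).

Definition rc_rel_is (R : realType) (X Y : zset) (k : nat) : Prop :=
  @separates R X Y k /\ forall m, (m < k)%N -> ~ @separates R X Y m.

Definition rc_is (R : realType) (X : zset) (k : nat) : Prop :=
  @rc_rel_is R X (fun _ => True) k.

Definition box (t : nat) : zset :=
  fun z => forall i : 'I_3, - (t%:Z) <= z i 0 <= t%:Z.

(* rc_l(X) = max_{t > 0} rc(X, B_t) = k *)
Definition rcl_is (R : realType) (X : zset) (k : nat) : Prop :=
  (exists t, (0 < t)%N /\ @rc_rel_is R X (box t) k) /\
  (forall t, (0 < t)%N -> exists m, (m <= k)%N /\ @rc_rel_is R X (box t) m).

From HB Require Import structures.
From mathcomp Require Import all_boot all_order all_algebra.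
From mathcomp Require Import reals boolp.
From mathcomp Require Import ring zify.
Set Implicit Arguments.
Unset Strict Implicit.
Unset Printing Implicit Defensive.

Import Order.TTheory GRing.Theory Num.Theory.
Local Open Scope ring_scope.

(* Since conv(Delta_3) has maximal volume, any four points of X span a simplex of
   normalized volume at most 1.  Applied to the facets of Delta_3 and combined with
   X ⊆ T_3, this confines X to Delta_3 and twelve further points of [-1,1]^3, and an
   enumeration of the subsets obeying the volume bound shows that each admissible X
   is a unimodular image of one of the four listed sets.
   For the relaxation complexity, four explicit inequalities cut each set out of Z^3.
   Conversely, if a point of the segment [u, v] between two integer points outside X
   lies in conv(X), no inequality valid on X is violated by both u and v.  For each set
   there are points of [-2,2]^3 whose graph of such pairs is not 3-colourable, so three
   inequalities cannot even separate X from the box B_2. *)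

Lemma det_mx33 (R : comNzRingType) (A : 'M[R]_3) :
  let a i j := A (inord i) (inord j) in
  \det A = a 0%N 0%N * (a 1%N 1%N * a 2%N 2%N - a 1%N 2%N * a 2%N 1%N)
         - a 0%N 1%N * (a 1%N 0%N * a 2%N 2%N - a 1%N 2%N * a 2%N 0%N)
         + a 0%N 2%N * (a 1%N 0%N * a 2%N 1%N - a 1%N 1%N * a 2%N 0%N).
Proof.
move=> a; have aE i j : A i j = a i j by rewrite /a !inord_val.
rewrite (expand_det_row _ 0) !big_ord_recl big_ord0 /cofactor.
rewrite !(expand_det_row _ 0) !big_ord_recl !big_ord0 /cofactor !det_mx11.
by rewrite !mxE !aE /= !expr0 !expr1 ?expr2; ring.
Qed.

Definition triple := (int * int * int)%type.

Definition coords (z : zpt) : triple := (z (inord 0) 0, z (inord 1) 0, z (inord 2) 0).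
Definition of_coords (x : triple) : zpt := mkpt x.1.1 x.1.2 x.2.

Lemma of_coordsK : cancel of_coords coords.
Proof. by case=> [[a b] c]; rewrite /coords /of_coords /mkpt !mxE !inordK. Qed.

Lemma coordsK : cancel coords of_coords.
Proof.
move=> z; apply/matrixP => i j; rewrite /of_coords /mkpt /coords mxE (ord1 j).
by case: i => [[|[|[|//]]]] i3 /=; congr (z _ _); apply: val_inj; rewrite /= inordK.
Qed.

Lemma of_coordsD : {morph of_coords : x y / x + y}.
Proof. by move=> x y; apply/matrixP => i j; rewrite !mxE; case: i => [[|[|[|]]]]. Qed.

Lemma seqset_of_coords (S : seq triple) z :
  seqset (map of_coords S) z <-> coords z \in S.
Proof. by rewrite /seqset -{1}[z]coordsK (mem_map (can_inj of_coordsK)). Qed.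

(* [det3 p q r s] is six times the signed volume of the simplex [p q r s]. *)
Definition det3 (p q r s : triple) : int :=
  let: (p1, p2, p3) := p in let: (q1, q2, q3) := q in
  let: (r1, r2, r3) := r in let: (s1, s2, s3) := s in
  (q1 - p1) * ((r2 - p2) * (s3 - p3) - (s2 - p2) * (r3 - p3))
  - (r1 - p1) * ((q2 - p2) * (s3 - p3) - (s2 - p2) * (q3 - p3))
  + (s1 - p1) * ((q2 - p2) * (r3 - p3) - (r2 - p2) * (q3 - p3)).

Section MaximalVolume.
Variable R : realType.

Lemma in_conv_point (X : zset) z : X z -> in_conv R X (toR R z).
Proof.
move=> Xz; exists 1%N, (fun=> z), (fun=> 1).
by split=> //; rewrite big_ord1 ?scale1r.
Qed.

Lemma simplex_volume_delta : simplex_volume R (delta_vertices R) = 6%:R^-1.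
Proof.
rewrite /simplex_volume.
have -> : \matrix_(i < 3, j < 3) (delta_vertices R (lift ord0 j) i 0
                                 - delta_vertices R ord0 i 0) = 1%:M.
  apply/matrixP => i j; rewrite !mxE /delta_vertices liftK unlift_none !mxE.
  by rewrite subr0 eqxx andbT eq_sym.
by rewrite det1 normr1 mul1r.
Qed.

Lemma simplex_volume_lattice (p q r s : zpt) :
  simplex_volume R (fun k : 'I_4 => toR R (nth 0 [:: p; q; r; s] k)) =
  `|det3 (coords p) (coords q) (coords r) (coords s)|%:~R / 6%:R.
Proof.
pose M := \matrix_(i < 3, j < 3)
  ((nth 0 [:: p; q; r; s] (lift ord0 j) : zpt) i 0 - p i 0).
rewrite /simplex_volume; set N := \matrix_(i, j) _.
have -> : N = map_mx intr M by apply/matrixP => i j; rewrite !mxE rmorphB.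
rewrite det_map_mx -intr_norm; congr (`|_|%:~R / _).
by rewrite det_mx33 !mxE /= /bump /= !inordK.
Qed.

Lemma max_vol_det3 (X : zset) p q r s :
  max_vol_simplex R X (delta_vertices R) -> X p -> X q -> X r -> X s ->
  `|det3 (coords p) (coords q) (coords r) (coords s)| <= 1.
Proof.
move=> [_ vol_max] Xp Xq Xr Xs.
have := vol_max (fun k : 'I_4 => toR R (nth 0 [:: p; q; r; s] k)).
rewrite simplex_volume_lattice simplex_volume_delta -[X in _ <= X]mul1r.
rewrite ler_pM2r ?invr_gt0 ?ltr0n // lerz1; apply.
by case=> [[|[|[|[|//]]]] ?]; apply: in_conv_point.
Qed.

End MaximalVolume.

Definition inbox (t : nat) (x : triple) : bool :=
  [&& - t%:Z <= x.1.1 <= t, - t%:Z <= x.1.2 <= t & - t%:Z <= x.2 <= t].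

Definition irange (t : nat) : seq int := [seq i%:Z - t%:Z | i <- iota 0 t.*2.+1].

Definition box_points (t : nat) : seq triple :=
  [seq (xy, z) | xy <- [seq (x, y) | x <- irange t, y <- irange t], z <- irange t].

Lemma mem_irange t x : (x \in irange t) = (- t%:Z <= x <= t).
Proof.
apply/mapP/idP => [[i /[!mem_iota] /andP[_ ilt] ->] | /andP[lex lex']]; first lia.
exists (absz (x + t%:Z)); rewrite ?mem_iota; lia.
Qed.

Lemma mem_box_points t x : (x \in box_points t) = inbox t x.
Proof.
case: x => [[x y] z]; rewrite /inbox /= -!mem_irange.
apply/allpairsP/and3P => [[[[x' y'] z']] [] | [? ? ?]].
  by move=> /allpairsP[[x'' y''] [/= ? ? [-> ->]]] ? [-> -> ->].
by exists ((x, y), z); split=> //; apply/allpairsP; exists (x, y).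
Qed.

Lemma box_of_coords t x : inbox t x -> box t (of_coords x).
Proof.
by case: x => [[a b] c] /and3P[? ? ?] i; rewrite /of_coords /mkpt mxE; case: i => [[|[|[|]]]].
Qed.

Definition delta_pts : seq triple := [:: (0, 0, 0); (1, 0, 0); (0, 1, 0); (0, 0, 1)].

Definition candidates : seq triple :=
  [seq x <- box_points 1 | (0 <= x.1.1 + x.1.2 + x.2 <= 2) && (x \notin delta_pts)].

Definition vol_bounded (L : seq triple) : bool :=
  all (fun p => all (fun q => all (fun r => all (fun s => `|det3 p q r s| <= 1) L) L) L) L.

Lemma vol_boundedP L :
  reflect {in L & L, forall p q, {in L & L, forall r s, `|det3 p q r s| <= 1}}
          (vol_bounded L).
Proof.
apply: (iffP allP) => [H p q Lp Lq r s Lr Ls | H p Lp].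
  exact: (allP (allP (allP (H p Lp) q Lq) r Lr) s Ls).
by apply/allP => q Lq; apply/allP => r Lr; apply/allP => s Ls; apply: H.
Qed.

Lemma vol_bounded_sub L M : {subset L <= M} -> vol_bounded M -> vol_bounded L.
Proof.
move=> sLM /vol_boundedP bM; apply/vol_boundedP => p q Lp Lq r s Lr Ls.
exact: bM (sLM _ _) (sLM _ _) _ _ (sLM _ _) (sLM _ _).
Qed.

Fixpoint bounded_extensions (base s : seq triple) : seq (seq triple) :=
  if s is x :: s' then
    let E := bounded_extensions base s' in
    [seq x :: L | L <- E & vol_bounded (base ++ x :: L)] ++ E
  else [:: [::]].

Lemma mem_bounded_extensions base s L :
  subseq L s -> vol_bounded (base ++ L) -> L \in bounded_extensions base s.
Proof.
elim: s L => [|x s IH] L /=; first by move/eqP->.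
case: L => [|y L]; first by move=> _ b0; rewrite mem_cat (IH _ (sub0seq s) b0) orbT.
case: eqP => [-> sLs bxL | _ sLs bL]; rewrite mem_cat; last by rewrite IH ?orbT.
rewrite map_f // mem_filter bxL IH //.
by apply: vol_bounded_sub bxL => z; rewrite !mem_cat inE => /orP[] ->; rewrite ?orbT.
Qed.

Lemma triple_addE (x y : triple) : x + y = (x.1.1 + y.1.1, x.1.2 + y.1.2, x.2 + y.2).
Proof. by []. Qed.

Lemma triple_mulrz (x : triple) n : x *~ n = (x.1.1 * n, x.1.2 * n, x.2 * n).
Proof.
by rewrite [LHS]surjective_pairing [(_ *~ _).1]surjective_pairing !raddfMz !mulrzz.
Qed.

Definition affine_map (a b c d x : triple) : triple :=
  a + (b - a) *~ x.1.1 + (c - a) *~ x.1.2 + (d - a) *~ x.2.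

Definition affine_matrix (a b c d : triple) : 'M[int]_3 :=
  \matrix_(i < 3, j < 3) of_coords (nth 0 [:: b - a; c - a; d - a] j) i 0.

Lemma det_affine_matrix a b c d : \det (affine_matrix a b c d) = det3 a b c d.
Proof.
by case: a b c d => [[? ?] ?] [[? ?] ?] [[? ?] ?] [[? ?] ?]; rewrite det_mx33 !mxE !inordK.
Qed.

Lemma coords_affine a b c d z :
  coords (affine_matrix a b c d *m z + of_coords a) = affine_map a b c d (coords z).
Proof.
pose zc k := z (inord k) 0.
have zE (i : 'I_3) : z i 0 = zc i by rewrite /zc inord_val.
case: a b c d => [[? ?] ?] [[? ?] ?] [[? ?] ?] [[? ?] ?].
rewrite /coords /affine_map !mxE !big_ord_recl !big_ord0 !mxE !zE !inordK //=.
by rewrite !triple_mulrz !triple_addE /= /bump /=; congr (_, _, _); ring.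
Qed.

Definition same_points (L M : seq triple) : bool :=
  all (fun x => x \in M) L && all (fun x => x \in L) M.

(* [if] instead of [&&] spares [vm_compute] the evaluation of the second operand. *)
Definition unimodular_copy (L M : seq triple) : bool :=
  if size L != size M then false else
  has (fun a => has (fun b => has (fun c => has (fun d =>
    if `|det3 a b c d| == 1 then same_points L (map (affine_map a b c d) M) else false)
  L) L) L) L.

Definition model (k : nat) : seq triple := delta_pts ++ nth [::]
  [:: [::]; [:: (-1, 0, 1)]; [:: (-1, 0, 1); (-1, 1, 0)]; [:: (-1, 0, 1); (0, -1, 1)]] k.

Lemma classification_check :
  all (fun L => has (fun k => unimodular_copy (delta_pts ++ L) (model k)) (iota 0 4))
      (bounded_extensions delta_pts candidates).
Proof. by vm_compute. Qed.

Lemma Delta3_of_coords x : x \in delta_pts -> Delta3 (of_coords x).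
Proof.
rewrite !inE => /or4P[] /eqP->; [left | right; exists 0 | right; exists 1 | right; exists 2];
  by apply/matrixP=> i j; rewrite (ord1 j) !mxE; case: i => [[|[|[|]]] ?].
Qed.

Lemma T3_of_coords x : T3 (of_coords x) ->
  [/\ x.1.1 <= 1, x.1.2 <= 1, x.2 <= 1 & 0 <= x.1.1 + x.1.2 + x.2].
Proof.
case=> le1; rewrite !big_ord_recl big_ord0 !mxE /= addr0 addrA; split=> //.
- by have := le1 0; rewrite mxE.
- by have := le1 1; rewrite mxE.
- by have := le1 2; rewrite mxE.
Qed.

Section Classification.
Variables (R : realType) (X : zset).
Hypothesis X_delta : forall z, Delta3 z -> X z.
Hypothesis X_T3 : forall z, X z -> T3 z.
Hypothesis X_maxvol : max_vol_simplex R X (delta_vertices R).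

Lemma coords_near_delta z : X z -> coords z \in delta_pts ++ candidates.
Proof.
rewrite -[z]coordsK; move: (coords z) => x Xx; rewrite of_coordsK.
have Xd p : p \in delta_pts -> X (of_coords p) by move/Delta3_of_coords/X_delta.
have vol p q r : p \in delta_pts -> q \in delta_pts -> r \in delta_pts ->
    `|det3 p q r x| <= 1.
  move=> /Xd Xp /Xd Xq /Xd Xr.
  by have := max_vol_det3 X_maxvol Xp Xq Xr Xx; rewrite !of_coordsK.
have := vol (0, 0, 0) (1, 0, 0) (0, 1, 0) isT isT isT.
have := vol (0, 0, 0) (1, 0, 0) (0, 0, 1) isT isT isT.
have := vol (0, 0, 0) (0, 1, 0) (0, 0, 1) isT isT isT.
have := vol (1, 0, 0) (0, 1, 0) (0, 0, 1) isT isT isT.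
have [] := T3_of_coords (X_T3 Xx).
rewrite mem_cat mem_filter mem_box_points; case: (x \in delta_pts) => //=.
case: x {Xx vol} => [[a b] c] /=; rewrite /det3 /inbox /= !ler_norml; lia.
Qed.

Theorem classification :
  exists2 k, (k < 4)%N & unimod_equiv X (seqset (map of_coords (model k))).
Proof.
pose T := [seq x <- candidates | `[< X (of_coords x) >]].
have XE z : X z <-> coords z \in delta_pts ++ T.
  split=> [Xz | ]; last first.
    rewrite mem_cat mem_filter coordsK.
    by case/orP=> [/Delta3_of_coords/X_delta | /andP[/asboolP]]; rewrite ?coordsK.
  have := coords_near_delta Xz; rewrite !mem_cat => /orP[->//|cz].
  by rewrite mem_filter cz andbT coordsK; apply/orP; right; apply/asboolP.
have bounded : vol_bounded (delta_pts ++ T).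
  apply/vol_boundedP=> p q Tp Tq r s Tr Ts.
  rewrite -[p]of_coordsK -[q]of_coordsK -[r]of_coordsK -[s]of_coordsK.
  by apply: max_vol_det3 X_maxvol _ _ _ _; apply/XE; rewrite of_coordsK.
have /hasP[k /[!mem_iota] /andP[_ k4]] :=
  allP classification_check T (mem_bounded_extensions (filter_subseq _ _) bounded).
rewrite /unimodular_copy; case: ifP => // _.
case/hasP=> a _ /hasP[b _ /hasP[c _ /hasP[d _]]].
case: ifP => // /eqP unimod /andP[/allP TM /allP MT]; exists k => //.
exists (affine_matrix a b c d), (of_coords a); split; first by rewrite det_affine_matrix.
move=> z; split=> [/XE/TM/mapP[y yM czE] | [z' /seqset_of_coords z'M ->]].
  exists (of_coords y); first by rewrite seqset_of_coords of_coordsK.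
  by apply: (can_inj coordsK); rewrite coords_affine of_coordsK.
by apply/XE; rewrite coords_affine; apply: MT; apply: map_f.
Qed.

End Classification.

Definition dot (u x : triple) : int := u.1.1 * x.1.1 + u.1.2 * x.1.2 + u.2 * x.2.

Definition satisfies (L : seq (triple * int)) (x : triple) : bool :=
  all (fun q => dot q.1 x <= q.2) L.

Section InequalitySystems.
Variable R : realType.

Definition ineq_matrix (L : seq (triple * int)) : 'M[R]_(size L, 3) :=
  \matrix_(i, j) (of_coords (nth 0 L i).1 j 0)%:~R.

Definition ineq_bound (L : seq (triple * int)) : 'cV[R]_(size L) :=
  \col_i ((nth 0 L i).2)%:~R.

Lemma ineq_matrix_row L i z :
  (ineq_matrix L *m toR R z) i 0 = (dot (nth 0 L i).1 (coords z))%:~R.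
Proof.
pose zc k := z (inord k) 0.
have zE (j : 'I_3) : z j 0 = zc j by rewrite /zc inord_val.
rewrite !mxE !big_ord_recl big_ord0 !mxE !zE /= /bump /=.
case: (nth 0 L i).1 => [[a b] c]; rewrite /dot /coords /zc /=.
by rewrite !rmorphD !rmorphM /= addr0 addrA.
Qed.

Lemma separates_of_system (L : seq (triple * int)) (S : seq triple) (Y : zset) :
  (forall x, (x \in S) = satisfies L x) -> separates R (seqset (map of_coords S)) Y (size L).
Proof.
move=> SE; exists (ineq_matrix L), (ineq_bound L); split.
  move=> z /seqset_of_coords; rewrite SE => /allP zL i.
  by rewrite ineq_matrix_row mxE ler_int zL ?mem_nth.
move=> z _ /seqset_of_coords; rewrite SE => /negP/allPn[q qL]; rewrite -ltNge => qz.
have iL : (index q L < size L)%N by rewrite index_mem.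
by exists (Ordinal iL); rewrite ineq_matrix_row mxE /= nth_index // ltr_int.
Qed.

End InequalitySystems.

Lemma satisfies_exact (L : seq (triple * int)) (S : seq triple) t :
  (forall x, satisfies L x -> inbox t x) ->
  all (satisfies L) S -> all (fun x => satisfies L x ==> (x \in S)) (box_points t) ->
  forall x, (x \in S) = satisfies L x.
Proof.
move=> bnd /allP SL /allP boxS x; apply/idP/idP => [xS|Lx]; first exact: SL.
by move: (boxS x); rewrite mem_box_points Lx bnd //= => /(_ isT).
Qed.

Fixpoint multisum (n : nat) (S : seq triple) (y : triple) : bool :=
  if n is n'.+1 then has (fun s => multisum n' S (y - s)) S else y == 0.

(* [(i u + j v) / (i + j)] is an average of [i + j] points of [S], hence lies in [conv S]. *)
Definition hidden_pair (S : seq triple) (u v : triple) : bool :=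
  has (fun ij => multisum (ij.1 + ij.2) S (u *+ ij.1 + v *+ ij.2))
      [:: (1, 1); (2, 1); (1, 2)]%N.

Section AdditiveCut.
Variables (R : numDomainType) (f : triple -> R) (b : R).
Hypothesis fD : {morph f : x y / x + y}.

Lemma addmorph0 : f 0 = 0.
Proof. by apply: (addrI (f 0)); rewrite -fD !addr0. Qed.

Lemma addmorphMn x n : f (x *+ n) = f x *+ n.
Proof. by elim: n => [|n IH]; rewrite ?addmorph0 // !mulrS fD IH. Qed.

Lemma multisum_le n S y : {in S, forall s, f s <= b} -> multisum n S y -> f y <= b *+ n.
Proof.
move=> Sb; elim: n y => [|n IH] y /=; first by move/eqP->; rewrite addmorph0.
by case/hasP=> s Ss /IH le; rewrite -(subrK s y) fD mulrSr lerD ?Sb.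
Qed.

Lemma hidden_pair_uncut S u v :
  hidden_pair S u v -> {in S, forall s, f s <= b} -> b < f u -> b < f v -> False.
Proof.
case/hasP=> -[i j] ij /multisum_le le Sb bu bv; have := le Sb.
have [i0 j0] : (0 < i)%N /\ (0 < j)%N by move: ij; rewrite !inE => /or3P[] /eqP[-> ->].
have lt : b *+ i + b *+ j < f u *+ i + f v *+ j by rewrite ltrD // ltr_pMn2r.
by rewrite fD !addmorphMn mulrnDr => /(lt_le_trans lt); rewrite ltxx.
Qed.

End AdditiveCut.

Fixpoint extends_coloring (q : nat) (nb : seq (seq nat)) (col : seq nat) (k : nat) : bool :=
  if k is k'.+1 then
    has (fun c => if all (fun i => nth 0%N col i != c) (nth [::] nb (size col))
                  then extends_coloring q nb (rcons col c) k' else false) (iota 0 q)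
  else true.

Section Coloring.
Variables (q n : nat) (nb : seq (seq nat)) (g : nat -> nat).
Hypothesis nb_lt : forall v i, i \in nth [::] nb v -> (i < v)%N.
Hypothesis g_ltq : forall v, (v < n)%N -> (g v < q)%N.

Lemma extends_coloring_complete k col :
  (forall v, (v < n)%N -> forall i, i \in nth [::] nb v -> g i != g v) ->
  (size col + k)%N = n -> col = map g (iota 0 (size col)) -> extends_coloring q nb col k.
Proof.
move=> proper; elim: k col => [//|k IH] col colkn colE; apply/hasP.
have coln : (size col < n)%N by rewrite -colkn addnS ltnS leq_addr.
exists (g (size col)); first by rewrite mem_iota g_ltq.
have colg i : (i < size col)%N -> nth 0%N col i = g i.
  by move=> ilt; rewrite colE (nth_map 0) ?size_iota // nth_iota.
case: ifP => [_|/negP[]]; last first.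
  by apply/allP=> i iN; rewrite colg ?nb_lt // proper.
apply: IH; first by rewrite size_rcons addSnnS.
by rewrite size_rcons -addn1 iotaD map_cat -colE cats1.
Qed.

Lemma monochromatic_edge :
  ~~ extends_coloring q nb [::] n ->
  exists v i, [/\ (v < n)%N, i \in nth [::] nb v & g i = g v].
Proof.
move=> /negP uncol; apply: contrapT => none; apply: uncol.
apply: extends_coloring_complete => // v vn i iv; apply/eqP => giv.
by apply: none; exists v, i.
Qed.

End Coloring.

Definition earlier_neighbours (S pts : seq triple) : seq (seq nat) :=
  [seq [seq i <- iota 0 v | hidden_pair S (nth 0 pts i) (nth 0 pts v)]
     | v <- iota 0 (size pts)].

Lemma earlier_neighbours_lt S pts v i :
  i \in nth [::] (earlier_neighbours S pts) v -> (i < v)%N.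
Proof.
rewrite /earlier_neighbours; have [vlt|vge] := ltnP v (size pts).
  by rewrite (nth_map 0%N) ?size_iota // nth_iota // mem_filter mem_iota => /andP[_].
by rewrite nth_default // size_map size_iota.
Qed.

Lemma hidden_pair_of_neighbours S pts v i :
  (v < size pts)%N -> i \in nth [::] (earlier_neighbours S pts) v ->
  hidden_pair S (nth 0 pts i) (nth 0 pts v).
Proof.
by move=> vlt; rewrite (nth_map 0%N) ?size_iota // nth_iota // mem_filter => /andP[].
Qed.

Section LowerBound.
Variable R : realType.

Lemma row_form_additive m (A : 'M[R]_(m, 3)) j :
  {morph (fun y => (A *m toR R (of_coords y)) j 0) : x y / x + y}.
Proof. by move=> x y /=; rewrite of_coordsD /toR map_mxD mulmxDr mxE. Qed.

Theorem hiding_graph_lower_bound (S pts : seq triple) t q :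
  all (fun y => inbox t y && (y \notin S)) pts ->
  ~~ extends_coloring q (earlier_neighbours S pts) [::] (size pts) ->
  forall m, (m <= q)%N -> ~ separates R (seqset (map of_coords S)) (box t) m.
Proof.
move=> /allP ptsP uncol m mq [A [c [valid cut]]].
pose f j y := (A *m toR R (of_coords y)) j 0.
pose cuts v j := c j 0 < f j (nth 0 pts v).
have cut_pts v : (v < size pts)%N -> exists j, cuts v j.
  move=> vlt; have /andP[yt yS] := ptsP _ (mem_nth 0 vlt).
  apply: cut; first exact: box_of_coords.
  by rewrite seqset_of_coords of_coordsK; apply/negP.
pose g v := if [pick j | cuts v j] is Some j then val j else 0%N.
have g_ltq v : (v < size pts)%N -> (g v < q)%N.
  move=> /cut_pts[j vj]; rewrite /g; case: pickP => [j' _ | /(_ j)]; last by rewrite vj.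
  exact: leq_trans (ltn_ord j') mq.
have [v [i [vlt iv giv]]] :=
  monochromatic_edge (@earlier_neighbours_lt S pts) g_ltq uncol.
have ilt := leq_trans (earlier_neighbours_lt iv) (ltnW vlt).
have pick_cut w : (w < size pts)%N -> exists2 j, cuts w j & g w = val j.
  move=> wlt; rewrite /g; case: pickP => [j wj | none]; first by exists j.
  by have [j wj] := cut_pts _ wlt; have := none j; rewrite wj.
have [j vj gv] := pick_cut _ vlt; have [j' ij gi] := pick_cut _ ilt.
have jj : j' = j by apply: val_inj; rewrite -gi -gv.
apply: (hidden_pair_uncut (row_form_additive A j) (hidden_pair_of_neighbours vlt iv)) vj.
  by move=> s sS; apply: valid; rewrite seqset_of_coords of_coordsK.
by rewrite -jj.
Qed.

End LowerBound.

Definition system (k : nat) : seq (triple * int) := nth [::]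
  [:: [:: ((-1, 0, 0), 0); ((0, -1, 0), 0); ((0, 0, -1), 0); ((1, 1, 1), 1)];
      [:: ((-2, -2, -2), 0); ((-1, 2, 1), 2); ((1, -2, 1), 1); ((2, 2, -1), 2)];
      [:: ((-2, -2, -2), 0); ((-1, 2, 2), 3); ((1, -2, 1), 1); ((2, 2, -1), 2)];
      [:: ((-3, -3, -2), 1); ((-3, 3, 1), 4); ((0, -1, -3), 0); ((3, 1, 3), 3)]] k.

Lemma size_system k : (k < 4)%N -> size (system k) = 4%N.
Proof. by case: k => [|[|[|[|//]]]]. Qed.

Lemma system_bounded k : (k < 4)%N -> forall x, satisfies (system k) x -> inbox 1 x.
Proof.
by case: k => [|[|[|[|//]]]] _ [[a b] c]; rewrite /satisfies /inbox /dot /=; lia.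
Qed.

Lemma model_system k : (k < 4)%N -> forall x, (x \in model k) = satisfies (system k) x.
Proof.
move=> k4; apply: satisfies_exact (system_bounded k4) _ _;
  by case: k k4 => [|[|[|[|//]]]] _; vm_compute.
Qed.

(* Found by a computer search for 4-chromatic graphs of hidden pairs. *)
Definition hiding_points (k : nat) : seq triple := nth [::] [::
    [:: (0, 1, 1); (0, -1, 1); (0, 1, -1); (1, 0, 1); (1, 0, -1); (-1, 0, 1);
        (1, 1, 0); (-1, 1, 0); (1, -1, 0); (-1, 1, 1); (1, -1, 1); (1, 1, -1);
        (-2, 0, 0); (2, 0, 0); (-1, 0, 2); (2, 0, -1); (-1, 2, 0); (2, -1, 0);
        (-2, 1, 1); (0, -1, 0); (0, 2, 0); (0, -1, 2); (0, 2, -1); (1, -2, 1);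
        (0, 0, -1); (0, 0, 2); (1, 1, -2); (-1, -1, 0); (1, 1, 2); (-1, 0, -1);
        (1, 2, 1); (0, -1, -1); (2, 1, 1)];
    [:: (-2, 0, 2); (2, 0, -2); (-1, 0, 2); (2, 1, -2); (0, 0, -1); (-1, 1, 2);
        (0, 1, -1); (1, 0, 1); (-1, -1, 2); (2, 1, -1); (-2, 0, 1); (1, 1, 0);
        (0, -1, 1); (-1, 1, 1); (0, 2, 1); (1, -2, -1); (2, 0, 0); (-2, 1, 1);
        (2, 0, -1); (-2, 1, 0); (2, -1, 1); (-1, -1, 0); (-1, 0, 0); (1, 1, 2)];
    [:: (-1, 1, 1); (1, -1, 1); (1, 1, -1); (-2, 1, 1); (0, -1, 1); (-1, 1, -1);
        (-2, 0, 1); (1, 0, 1); (-2, 1, 0); (1, 1, 0); (-1, 0, 0); (2, 0, 0)];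
    [:: (-1, -1, 2); (-1, 1, 0); (1, -1, 0); (1, 1, 0)]] k.

Lemma hiding_points_check k : (k < 4)%N ->
  all (fun y => inbox 2 y && (y \notin model k)) (hiding_points k) &&
  ~~ extends_coloring 3 (earlier_neighbours (model k) (hiding_points k)) [::]
                       (size (hiding_points k)).
Proof. by case: k => [|[|[|[|//]]]] _; vm_compute. Qed.

Section RelaxationComplexity.
Variables (R : realType) (X : zset).

Lemma separates_sub (Y Y' : zset) m :
  (forall y, Y' y -> Y y) -> separates R X Y m -> separates R X Y' m.
Proof. by move=> YY' [A [b [valid cut]]]; exists A, b; split=> // y /YY'; apply: cut. Qed.

Lemma rc_of_bounds k t : (0 < t)%N ->
  (forall Y, separates R X Y k) -> (forall m, (m < k)%N -> ~ separates R X (box t) m) ->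
  rcl_is R X k /\ rc_is R X k.
Proof.
move=> t0 upper lower; split; last first.
  by split=> // m mk /(separates_sub (Y' := box t)) sep; apply: (lower m mk); apply: sep.
split; first by exists t.
move=> t' _; have sepk : exists m, `[< separates R X (box t') m >] by exists k; apply/asboolP.
case: (ex_minnP sepk) => m /asboolP sepm minm; exists m; split.
  by apply: minm; apply/asboolP.
by split=> // m' m'm /asboolP/minm; rewrite leqNgt m'm.
Qed.

End RelaxationComplexity.

Theorem lemma3p1 (R : realType) (X : zset) :
  @lattice_convex R X ->
  (forall z, Delta3 z -> X z) ->
  (forall z, X z -> T3 z) ->
  @max_vol_simplex R X (delta_vertices R) ->
  (unimod_equiv X (seqset S1) \/ unimod_equiv X (seqset S2) \/
   unimod_equiv X (seqset S3) \/ unimod_equiv X (seqset S4)) /\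
  (forall S, S \in [:: S1; S2; S3; S4] ->
     @rcl_is R (seqset S) 4 /\ @rc_is R (seqset S) 4).
Proof.
move=> _ X_delta X_T3 X_maxvol; split.
  have [k k4 equiv] := classification X_delta X_T3 X_maxvol.
  by case: k k4 equiv => [|[|[|[|//]]]] _ equiv;
    [left | right; left | right; right; left | right; right; right].
have -> : [:: S1; S2; S3; S4] = [seq map of_coords (model k) | k <- iota 0 4] by [].
move=> S /mapP[k /[!mem_iota] /andP[_ k4] ->].
have /andP[pts_out uncol] := hiding_points_check k4.
apply: (rc_of_bounds (t := 2)) => // [Y | m m4].
  by rewrite -(size_system k4); apply: separates_of_system; apply: model_system.
exact: hiding_graph_lower_bound pts_out uncol m m4.
Qed.
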